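(* Let $A=\{1/n:n\in\mathbb{Z}\setminus\{0\}\}$ and $B=\{\sqrt2/n:n\in\mathbb{Z}\setminus\{0\}\}$. Define $f,g:\mathbb{R}\to\mathbb{R}$ by $f(x)=x$ for $x\in A\cup\{0\}$, $f(x)=-1$ for $x>0$, $x\notin A$, $f(x)=1$ for $x<0$, $x\notin A$; and $g(x)=x$ for $x\in B\cup\{0\}$, $g(x)=-2$ for $x>0$, $x\notin B$, $g(x)=2$ for $x<0$, $x\notin B$. Then $f$ and $g$ are weakly symmetrically continuous at $0$, but none of $f+g$, $f-g$, $\max\{f,g\}$, $\min\{f,g\}$ is weakly symmetrically continuous at $0$.
   Context: For $D\subseteq\mathbb{R}$ nonempty and $a\in D$, $S_a(D)$ is the set of all sequences $(h_n)$ of positive reals converging to $0$ with $a\pm h_n\in D$ for every $n$. A function $f:D\to\mathbb{R}$ is weakly symmetrically continuous at $a$ if, whenever $S_a(D)\neq\emptyset$, there exists $(h_n)\in S_a(D)$ with $f(a+h_n)-f(a-h_n)\to0$. *)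

From Stdlib Require Import Reals Lra ZArith ClassicalEpsilon ClassicalDescription.
Open Scope R_scope.

Definition S_seq (D : R -> Prop) (a : R) (h : nat -> R) : Prop :=
  (forall n, 0 < h n) /\ Un_cv h 0 /\
  (forall n, D (a + h n) /\ D (a - h n)).

(* f : D -> R represented as a total function on R, only its values on D matter *)
Definition weakly_sym_cont (D : R -> Prop) (f : R -> R) (a : R) : Prop :=
  (exists h, S_seq D a h) ->
  exists h, S_seq D a h /\ Un_cv (fun n => f (a + h n) - f (a - h n)) 0.

Definition setA (x : R) : Prop := exists n : Z, n <> 0%Z /\ x = 1 / IZR n.
Definition setB (x : R) : Prop := exists n : Z, n <> 0%Z /\ x = sqrt 2 / IZR n.

Definition ex_f (x : R) : R :=
  if Req_EM_T x 0 then x else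
  match excluded_middle_informative (setA x) with
  | left _ => x
  | right _ => if Rlt_dec 0 x then -1 else 1
  end.

Definition ex_g (x : R) : R :=
  if Req_EM_T x 0 then x else
  match excluded_middle_informative (setB x) with
  | left _ => x
  | right _ => if Rlt_dec 0 x then -2 else 2
  end.

(* Along the positive sequence h_n = c/(n+1) the symmetric differences of a jump function
   through its own set are 2 h_n -> 0, which gives weak symmetric continuity of f (c = 1) and
   g (c = sqrt 2).  Since sqrt 2 is irrational, A and B are disjoint, so every x in (0, 1/2)
   lies outside A or outside B; in each of the three resulting configurations the symmetric
   difference of f + g, f - g, max(f, g) and min(f, g) at x is at least 1/2 in absolute value,
   and no sequence in S_0 can make it tend to 0. *)
From Stdlib Require Import Reals Lra Lia ZArith ClassicalDescription.
Open Scope R_scope.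

Lemma Zsquare_neq_double_square (n m : Z) : (n <> 0)%Z -> (m * m <> 2 * n * n)%Z.
Proof.
  enough (H : forall k, (0 <= k)%Z -> (0 < k)%Z -> forall p, (p * p <> 2 * k * k)%Z).
  { intros Hn E. apply (H (Z.abs n) ltac:(lia) ltac:(lia) m).
    rewrite E, <- !Z.mul_assoc, Z.abs_square. reflexivity. }
  clear n m. intros k Hk. pattern k. apply Z_lt_induction; [clear k Hk | exact Hk].
  intros k IH Hk p E.
  destruct (Z.Even_or_Odd p) as [[q ->] | [q ->]]; [| nia].
  (* p = 2q gives k^2 = 2 q^2, a smaller solution with the roles swapped *)
  assert (Hq : (0 < Z.abs q)%Z) by nia.
  apply (IH (Z.abs q) ltac:(nia) Hq k). nia.
Qed.

Lemma Un_cv_ext (u v : nat -> R) (l : R) :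
  (forall n, u n = v n) -> Un_cv u l -> Un_cv v l.
Proof.
  intros E Hu eps Heps. destruct (Hu eps Heps) as [N HN].
  exists N. intro n. rewrite <- E. auto.
Qed.

Lemma Un_cv_scal_0 (c : R) (u : nat -> R) : Un_cv u 0 -> Un_cv (fun n => c * u n) 0.
Proof.
  intro Hu. rewrite <- (Rmult_0_r c). apply CV_mult; [| exact Hu].
  intros eps Heps. exists 0%nat. intros n _. unfold R_dist. rewrite Rminus_diag, Rabs_R0. exact Heps.
Qed.

Lemma cv_infty_INR_S : cv_infty (fun n => INR (S n)).
Proof.
  intro M. destruct (INR_unbounded M) as [N HN]. exists N.
  intros n Hn. apply le_INR in Hn. rewrite S_INR. lra.
Qed.

Lemma S_seq_div_INR_S (c : R) : 0 < c -> S_seq (fun _ => True) 0 (fun n => c / INR (S n)).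
Proof.
  intro Hc. split; [| split; [| easy]].
  - intro n. apply Rdiv_lt_0_compat; [exact Hc | apply lt_0_INR; lia].
  - exact (Un_cv_scal_0 c _ (cv_infty_cv_0 _ cv_infty_INR_S)).
Qed.

Lemma not_weakly_sym_cont_of_gap (F : R -> R) (c d : R) : 0 < c -> 0 < d ->
  (forall x, 0 < x < d -> c <= Rabs (F x - F (- x))) ->
  ~ weakly_sym_cont (fun _ => True) F 0.
Proof.
  intros Hc Hd Hgap W.
  destruct (W (ex_intro _ _ (S_seq_div_INR_S 1 Rlt_0_1))) as [h [[Hpos [Hh _]] Hdiff]].
  destruct (Hh d Hd) as [N1 HN1]. destruct (Hdiff c Hc) as [N2 HN2].
  set (n := max N1 N2).
  specialize (HN1 n ltac:(lia)). specialize (HN2 n ltac:(lia)). specialize (Hpos n).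
  unfold R_dist in HN1, HN2. rewrite Rminus_0_r, Rabs_pos_eq in HN1 by lra.
  rewrite Rminus_0_r, Rplus_0_l, Rminus_0_l in HN2.
  specialize (Hgap (h n) ltac:(lra)). lra.
Qed.

Definition jump_fun (S : R -> Prop) (r l x : R) : R :=
  if Req_EM_T x 0 then x else
  match excluded_middle_informative (S x) with
  | left _ => x
  | right _ => if Rlt_dec 0 x then r else l
  end.

Section JumpFunction.

Variables (S : R -> Prop) (r l : R).
Hypothesis S_opp : forall x, S x -> S (- x).

Lemma jump_fun_cases (x : R) : 0 < x ->
  (S x /\ jump_fun S r l x = x /\ jump_fun S r l (- x) = - x) \/
  (~ S x /\ jump_fun S r l x = r /\ jump_fun S r l (- x) = l).
Proof.
  intro Hx. unfold jump_fun.
  destruct (Req_EM_T x 0); [lra |]. destruct (Req_EM_T (- x) 0); [lra |].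
  destruct (excluded_middle_informative (S x)) as [Sx | nSx];
    destruct (excluded_middle_informative (S (- x))) as [Snx | nSnx].
  - now left.
  - now apply S_opp in Sx.
  - apply S_opp in Snx. rewrite Ropp_involutive in Snx. contradiction.
  - right. destruct (Rlt_dec 0 x); [| lra]. destruct (Rlt_dec 0 (- x)); [lra |]. auto.
Qed.

Lemma weakly_sym_cont_jump_fun (h : nat -> R) :
  S_seq (fun _ => True) 0 h -> (forall n, S (h n)) ->
  weakly_sym_cont (fun _ => True) (jump_fun S r l) 0.
Proof.
  intros Hh HS _. exists h. split; [exact Hh |].
  destruct Hh as [Hpos [Hcv _]].
  apply (Un_cv_ext (fun n => 2 * h n)); [| exact (Un_cv_scal_0 2 h Hcv)].
  intro n. rewrite Rplus_0_l, Rminus_0_l.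
  destruct (jump_fun_cases (h n) (Hpos n)) as [[_ [-> ->]] | [nS _]]; [ring | contradiction (nS (HS n))].
Qed.

End JumpFunction.

Definition int_reciprocals (c x : R) : Prop := exists n : Z, n <> 0%Z /\ x = c / IZR n.

Lemma int_reciprocals_opp (c x : R) : int_reciprocals c x -> int_reciprocals c (- x).
Proof.
  intros [n [Hn ->]]. exists (- n)%Z. split; [lia |].
  rewrite opp_IZR. field. now apply not_0_IZR.
Qed.

Lemma int_reciprocals_div_INR_S (c : R) (n : nat) : int_reciprocals c (c / INR (S n)).
Proof. exists (Z.of_nat (S n)). split; [lia |]. now rewrite <- INR_IZR_INZ. Qed.

Lemma int_reciprocals_1_sqrt2_disjoint (x : R) :
  int_reciprocals 1 x -> ~ int_reciprocals (sqrt 2) x.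
Proof.
  intros [n [Hn ->]] [m [Hm E]].
  assert (Hn' : IZR n <> 0) by now apply not_0_IZR.
  assert (Hm' : IZR m <> 0) by now apply not_0_IZR.
  assert (Em : IZR m = sqrt 2 * IZR n).
  { apply (Rmult_eq_reg_r (/ (IZR n * IZR m)));
      [| apply Rinv_neq_0_compat, Rmult_integral_contrapositive; auto].
    replace (IZR m * / (IZR n * IZR m)) with (1 / IZR n) by (field; auto).
    rewrite E. field. auto. }
  apply (Zsquare_neq_double_square n m Hn), eq_IZR.
  rewrite !mult_IZR, Em.
  replace (sqrt 2 * IZR n * (sqrt 2 * IZR n)) with (sqrt 2 * sqrt 2 * IZR n * IZR n) by ring.
  rewrite sqrt_sqrt by lra. ring.
Qed.

Lemma ex_f_jump : ex_f = jump_fun (int_reciprocals 1) (-1) 1.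
Proof. reflexivity. Qed.

Lemma ex_g_jump : ex_g = jump_fun (int_reciprocals (sqrt 2)) (-2) 2.
Proof. reflexivity. Qed.

Lemma ex_f_ex_g_cases (x : R) : 0 < x ->
  (ex_f x = x /\ ex_f (- x) = - x /\ ex_g x = -2 /\ ex_g (- x) = 2) \/
  (ex_f x = -1 /\ ex_f (- x) = 1 /\ ex_g x = x /\ ex_g (- x) = - x) \/
  (ex_f x = -1 /\ ex_f (- x) = 1 /\ ex_g x = -2 /\ ex_g (- x) = 2).
Proof.
  intro Hx. rewrite ex_f_jump, ex_g_jump.
  destruct (jump_fun_cases _ (-1) 1 (int_reciprocals_opp 1) x Hx) as [[A [-> ->]] | [_ [-> ->]]];
    destruct (jump_fun_cases _ (-2) 2 (int_reciprocals_opp (sqrt 2)) x Hx)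
      as [[B [-> ->]] | [_ [-> ->]]];
    [now elim (int_reciprocals_1_sqrt2_disjoint x A) | left | right; left | right; right];
    repeat split.
Qed.

Lemma not_weakly_sym_cont_combination (op : R -> R -> R) :
  (forall x, 0 < x < 1 / 2 ->
     1 / 2 <= Rabs (op x (-2) - op (- x) 2) /\
     1 / 2 <= Rabs (op (-1) x - op 1 (- x)) /\
     1 / 2 <= Rabs (op (-1) (-2) - op 1 2)) ->
  ~ weakly_sym_cont (fun _ => True) (fun x => op (ex_f x) (ex_g x)) 0.
Proof.
  intro Hop. apply (not_weakly_sym_cont_of_gap _ (1 / 2) (1 / 2)); [lra | lra |].
  intros x Hx. destruct (Hop x Hx) as [H1 [H2 H3]].
  destruct (ex_f_ex_g_cases x ltac:(lra))
    as [[-> [-> [-> ->]]] | [[-> [-> [-> ->]]] | [-> [-> [-> ->]]]]]; assumption.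
Qed.

Theorem mainTheorem6 :
  let D := fun _ : R => True in
  weakly_sym_cont D ex_f 0 /\ weakly_sym_cont D ex_g 0 /\
  ~ weakly_sym_cont D (fun x => ex_f x + ex_g x) 0 /\
  ~ weakly_sym_cont D (fun x => ex_f x - ex_g x) 0 /\
  ~ weakly_sym_cont D (fun x => Rmax (ex_f x) (ex_g x)) 0 /\
  ~ weakly_sym_cont D (fun x => Rmin (ex_f x) (ex_g x)) 0.
Proof.
  intro D. unfold D. split; [| split].
  - rewrite ex_f_jump.
    apply (weakly_sym_cont_jump_fun _ _ _ (int_reciprocals_opp 1) _ (S_seq_div_INR_S 1 Rlt_0_1)).
    apply int_reciprocals_div_INR_S.
  - assert (Hsqrt2 : 0 < sqrt 2) by (apply sqrt_lt_R0; lra).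
    rewrite ex_g_jump.
    apply (weakly_sym_cont_jump_fun _ _ _ (int_reciprocals_opp _) _ (S_seq_div_INR_S _ Hsqrt2)).
    apply int_reciprocals_div_INR_S.
  - repeat split; apply not_weakly_sym_cont_combination; intros x Hx; repeat split;
      unfold Rabs, Rmax, Rmin; repeat destruct Rle_dec; repeat destruct Rcase_abs; lra.
Qed.
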